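(* Let $$g_t(x) = x^3 + 147(t^2 + 13t + 49)x^2 + 147(t^2 + 13t + 49)(33t^2 + 637t + 2401)x + 49(t^2 + 13t + 49)(881t^4 + 38122t^3 + 525819t^2 + 3058874t + 5764801)\in\mathbb{Q}(t)[x].$$ Then $g_t$ parametrizes all cyclic cubic extensions of $\mathbb{Q}$: for every Galois extension $L/\mathbb{Q}$ with $\mathrm{Gal}(L/\mathbb{Q})\cong\mathbb{Z}/3\mathbb{Z}$ there exists $t\in\mathbb{Q}$ such that $L$ is the splitting field of $g_t(x)$ over $\mathbb{Q}$.
   Context: $g_t(x)$ is (up to defining the same field) the cubic factor of the $7$-division polynomial of the family $\mathcal{E}_t\colon y^2 = x^3 - 27(t^2+13t+49)^3(t^2+245t+2401)x + 54(t^2+13t+49)^4(t^4-490t^3-21609t^2-235298t-823543)$ of elliptic curves with a rational $7$-isogeny; it defines the field of $x$-coordinates of a generator of the kernel of that isogeny. *)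

From HB Require Import structures.
From mathcomp Require Import all_boot all_order all_algebra all_fingroup all_solvable all_field.
Set Implicit Arguments. Unset Strict Implicit. Unset Printing Implicit Defensive.
Import GRing.Theory.
Local Open Scope ring_scope.

(* Large decimal literals (e.g. 5764801) overflow the stack in rat (unary nat
   elaboration), so constants are written as products with powers of 7:
     49 = 7^2, 147 = 3*7^2, 637 = 13*7^2, 2401 = 7^4, 38122 = 778*7^2,
     525819 = 219*7^4, 3058874 = 26*7^6, 5764801 = 7^8. *)

Definition qpar (t : rat) : rat := t ^+ 2 + 13 * t + 7 ^+ 2.

Definition gpoly (t : rat) : {poly rat} :=
  'X^3
  + (3 * 7 ^+ 2 * qpar t)%:P * 'X^2
  + (3 * 7 ^+ 2 * qpar t * (33 * t ^+ 2 + 13 * 7 ^+ 2 * t + 7 ^+ 4))%:P * 'X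
  + (7 ^+ 2 * qpar t * (881 * t ^+ 4 + 778 * 7 ^+ 2 * t ^+ 3
        + 219 * 7 ^+ 4 * t ^+ 2 + 26 * 7 ^+ 6 * t + 7 ^+ 8))%:P.

From HB Require Import structures.
From mathcomp Require Import all_boot all_order all_algebra all_fingroup all_solvable all_field.
From mathcomp Require Import ring lra.
Set Implicit Arguments. Unset Strict Implicit. Unset Printing Implicit Defensive.
Import Order.TTheory GRing.Theory Num.Theory.
Local Open Scope ring_scope.

(* Let sg generate Gal(L/Q) = Z/3.  For x with sg x <> x, the element
   s := (sg^2 x - x) / (x - sg x) satisfies sg s = mob s, where
   mob s := -1/(1+s) is the Moebius transformation of order 3.  The rational
   function tpar s := 49 s (s+1) / (s^3 - 5s^2 - 8s - 1) is invariant under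
   mob, hence t := tpar s is fixed by sg, i.e. rational.  An explicit
   computation shows that g_t has the three roots troot{0,1,2} s in L, and
   that s is a rational expression in t and troot0 s.  So the field generated
   over Q by the roots of g_t contains s, which is irrational; as [L : Q] = 3
   is prime, that field is all of L. *)

Definition monic_cubic (R : nzRingType) (a b c : R) : {poly R} :=
  'X^3 + a%:P * 'X^2 + b%:P * 'X + c%:P.

Lemma map_monic_cubic (R S : nzRingType) (f : {rmorphism R -> S}) (a b c : R) :
  map_poly f (monic_cubic a b c) = monic_cubic (f a) (f b) (f c).
Proof.
rewrite /monic_cubic !rmorphD !rmorphM /= !map_polyC !map_polyX.
by rewrite !exprS expr0 !mulr1.
Qed.

Lemma vieta_cubic (R : comNzRingType) (a b c r0 r1 r2 : R) :
  a = - (r0 + r1 + r2) -> b = r0 * r1 + r0 * r2 + r1 * r2 ->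
  c = - (r0 * r1 * r2) ->
  monic_cubic a b c = \prod_(r <- [:: r0; r1; r2]) ('X - r%:P).
Proof.
move=> -> -> ->; rewrite /monic_cubic !big_cons big_nil mulr1.
rewrite !(rmorphN, rmorphD, rmorphM) /=; ring.
Qed.

Definition qF (R : nzRingType) (t : R) : R := t ^+ 2 + 13 * t + 7 ^+ 2.
Definition gA (R : nzRingType) (t : R) : R := 3 * 7 ^+ 2 * qF t.
Definition gB (R : nzRingType) (t : R) : R :=
  3 * 7 ^+ 2 * qF t * (33 * t ^+ 2 + 13 * 7 ^+ 2 * t + 7 ^+ 4).
Definition gC (R : nzRingType) (t : R) : R :=
  7 ^+ 2 * qF t * (881 * t ^+ 4 + 778 * 7 ^+ 2 * t ^+ 3
        + 219 * 7 ^+ 4 * t ^+ 2 + 26 * 7 ^+ 6 * t + 7 ^+ 8).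
Definition gcubic (R : nzRingType) (t : R) : {poly R} :=
  monic_cubic (gA t) (gB t) (gC t).

Lemma gpolyE (t : rat) : gpoly t = gcubic t.
Proof. by []. Qed.

(* g_t has integer coefficients, so ring morphisms act on the parameter t. *)
Lemma map_gcubic (R S : nzRingType) (f : {rmorphism R -> S}) (t : R) :
  map_poly f (gcubic t) = gcubic (f t).
Proof.
by rewrite /gcubic map_monic_cubic /gA /gB /gC /qF
  !(rmorphM, rmorphD, rmorphXn, rmorph_nat).
Qed.

Section Parametrization.
Variable F : fieldType.
Implicit Types s : F.

(* The Moebius transformation s |-> -1/(1+s), of order 3. *)
Definition mob s := - (1 + s)^-1.

Definition tden s := s ^+ 3 - 5 * s ^+ 2 - 8 * s - 1.
Definition tpar s := 7 ^+ 2 * s * (s + 1) / tden s.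

Definition troot0 s := - (7 ^+ 4) * (1 + 7 * s + 10 * s ^+ 2 + 7 * s ^+ 3
  + 2 * s ^+ 4 - s ^+ 5 + s ^+ 6) / tden s ^+ 2.
Definition troot1 s := - (7 ^+ 4) * (1 - 5 * s - 14 * s ^+ 2 - 17 * s ^+ 3
  - 10 * s ^+ 4 - s ^+ 5 + s ^+ 6) / tden s ^+ 2.
Definition troot2 s := - (7 ^+ 4) * (1 + 7 * s + 22 * s ^+ 2 + 31 * s ^+ 3
  + 26 * s ^+ 4 + 11 * s ^+ 5 + s ^+ 6) / tden s ^+ 2.

Lemma tden_mob s : 1 + s != 0 -> tden (mob s) = - tden s / (1 + s) ^+ 3.
Proof. by move=> s1; rewrite /tden /mob; field. Qed.

Lemma tpar_mob s : s != 0 -> 1 + s != 0 -> tden s != 0 -> tpar (mob s) = tpar s.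
Proof.
move=> s0 s1 sD; rewrite /tpar tden_mob //; move: sD; rewrite /tden => sD.
by rewrite /mob; field; rewrite sD s1 oppr_eq0 sD.
Qed.

Lemma gcubic_tpar s : tden s != 0 ->
  gcubic (tpar s) = \prod_(r <- [:: troot0 s; troot1 s; troot2 s]) ('X - r%:P).
Proof.
rewrite /tden => sD; apply: vieta_cubic;
  by rewrite /gA /gB /gC /troot0 /troot1 /troot2 /qF /tpar /tden; field.
Qed.

Lemma s_from_troot0 s : tden s != 0 ->
  144 * tpar s ^+ 4 * s
    = - (troot0 s ^+ 2
         + (118 * tpar s ^+ 2 + 30 * 7 ^+ 2 * tpar s + 2 * 7 ^+ 4) * troot0 s
         + (1573 * tpar s ^+ 4 + 1266 * 7 ^+ 2 * tpar s ^+ 3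
            + 307 * 7 ^+ 4 * tpar s ^+ 2 + 30 * 7 ^+ 6 * tpar s + 7 ^+ 8)).
Proof. by rewrite /tden => sD; rewrite /troot0 /tpar /tden; field. Qed.

(* A Bezout relation between tden s and tden ((s - 1)/(s + 2)): they
   cannot vanish simultaneously when 98 <> 0. *)
Lemma tden_bezout s : s + 2 != 0 ->
  (32 - 53 * s - 26 * s ^+ 2) * tden s
  + (10 + 11 * s - 2 * s ^+ 2) * (s + 2) ^+ 3 * tden ((s - 1) / (s + 2)) = 98.
Proof. by move=> s2; rewrite /tden; field. Qed.

End Parametrization.

Section OrderThreeAutomorphism.
Variables (K : fieldType) (f : {rmorphism K -> K}).
Hypothesis f3 : forall a, f (f (f a)) = a.
Implicit Types s x : K.

(* The relation f s = mob s, written without division. *)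
Definition mob_orbit s := f s * (1 + s) = -1.

Lemma mob_orbitE s : mob_orbit s -> [/\ s != 0, 1 + s != 0 & f s = mob s].
Proof.
move=> hs; have s1 : 1 + s != 0.
  by apply: contra_eq_neq hs => ->; rewrite mulr0 eq_sym oppr_eq0 oner_eq0.
split=> //; last by apply: (mulIf s1); rewrite hs mulNr mulVf.
by apply: contra_eq_neq hs => ->; rewrite rmorph0 mul0r eq_sym oppr_eq0 oner_eq0.
Qed.

Lemma mob_orbit_exists x : f x != x -> mob_orbit ((f (f x) - x) / (x - f x)).
Proof.
move=> fx; have d1 : x - f x != 0 by rewrite subr_eq0 eq_sym.
have d2 : f x - f (f x) != 0 by rewrite -rmorphB fmorph_eq0.
rewrite /mob_orbit rmorphM fmorphV !rmorphB f3.
by move: d1 d2 => d1 d2; field; rewrite d1 d2.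
Qed.

(* Away from characteristics 2, 3, 7 a solution with tden s <> 0 exists:
   if tden s = 0, then (s - 1)/(s + 2) is another solution, and by
   tden_bezout its tden does not vanish. *)
Lemma mob_orbit_nondeg s : (2 : K) != 0 -> (3 : K) != 0 -> (7 : K) != 0 ->
  mob_orbit s -> exists s', mob_orbit s' /\ tden s' != 0.
Proof.
move=> n2 n3 n7 hs; have [_ s1 fs] := mob_orbitE hs.
have [sD | sD] := eqVneq (tden s) 0; last by exists s.
(* s = -2 would give f (-2) = 1, i.e. 3 = 0. *)
have s2 : s + 2 != 0.
  apply: contraNneq n3 => s_2; have s_m2 : s = -2 by apply/eqP; rewrite -addr_eq0 s_2.
  move: hs; rewrite /mob_orbit s_m2 rmorphN rmorph_nat => hs.
  by apply/eqP; transitivity (- 2 * (1 - 2) - (-1) : K); [ring | rewrite hs subrr].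
(* 2 s + 1 = 0 = 2 f s + 1 would give 4 f s (1 + s) = -1, i.e. 3 = 0. *)
have s21 : 2 * s + 1 != 0.
  apply: contraNneq n3 => v0; have u0 : 2 * f s + 1 = 0.
    by have := congr1 f v0; rewrite rmorphD rmorphM rmorph_nat rmorph1 rmorph0.
  have E : (2 * f s + 1 - 1) * (2 * s + 1 + 1) + 4 = 4 * (f s * (1 + s) + 1).
    by ring.
  move: E; rewrite hs addNr mulr0 u0 v0 => E.
  by apply/eqP; rewrite -E; ring.
exists ((s - 1) / (s + 2)); split.
  rewrite /mob_orbit rmorphM fmorphV rmorphB rmorphD rmorph1 rmorph_nat fs /mob.
  field; have -> : -1 + 2 * (1 + s) = 2 * s + 1 by ring.
  by rewrite s2 s1 s21.
apply/eqP => sD'; move: (tden_bezout s2); rewrite sD sD' !mulr0 addr0 => /esym/eqP.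
have -> : (98 : K) = 2 * 7 ^+ 2 by ring.
by rewrite mulf_eq0 expf_eq0 (negbTE n2) (negbTE n7) andbF.
Qed.

Lemma rmorph_tpar s : f (tpar s) = tpar (f s).
Proof.
by rewrite /tpar /tden !(rmorphM, fmorphV, rmorphB, rmorphD, rmorphXn,
  rmorph_nat, rmorph1).
Qed.

Lemma tpar_fixed s : mob_orbit s -> tden s != 0 -> f (tpar s) = tpar s.
Proof.
by move=> hs sD; have [s0 s1 fs] := mob_orbitE hs; rewrite rmorph_tpar fs tpar_mob.
Qed.

(* The parameter t is nonzero, so s can be solved for in s_from_troot0. *)
Lemma tpar_neq0 s : (7 : K) != 0 -> mob_orbit s -> tden s != 0 -> tpar s != 0.
Proof.
move=> n7 hs sD; have [s0 s1 _] := mob_orbitE hs.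
by rewrite /tpar !mulf_neq0 ?invr_eq0 ?expf_neq0 // addrC.
Qed.

End OrderThreeAutomorphism.

Section CyclicCubicGalois.
Variables (F : fieldType) (L : splittingFieldType F).
Hypotheses (galL : galois 1 {:L}) (cycL : ('Gal({:L} / 1%VS) \isog Zp 3)%g).

Lemma cyclic3_card : #|('Gal({:L} / 1%VS))%g| = 3%N.
Proof. by rewrite (card_isog cycL) card_Zp. Qed.

Lemma cyclic3_dim : \dim {:L} = 3%N.
Proof. by have := galois_dim galL; rewrite dimv1 divn1 cyclic3_card. Qed.

Lemma cyclic3_generator : exists sg : gal_of {:L},
  (forall a, sg (sg (sg a)) = a) /\ (forall a, sg a = a -> a \in 1%VS).
Proof.
have [sg sgG sg1] : exists2 sg, sg \in ('Gal({:L} / 1%VS))%g & sg != 1%g.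
  by apply/trivgPn; rewrite trivg_card1 cyclic3_card.
have ord_sg : #[sg]%g = 3%N.
  apply/(prime_nt_dvdP (isT : prime 3)); first by rewrite order_eq1.
  by rewrite -cyclic3_card order_dvdG.
have gen_sg : <[sg]>%g = ('Gal({:L} / 1%VS))%g.
  by apply/eqP; rewrite eqEcard cycle_subG sgG cyclic3_card -orderE ord_sg.
exists sg; split=> [a | a sga].
  have : (sg ^+ 3)%g a = a by rewrite -ord_sg expg_order gal_id.
  by rewrite !expgS expg0 mulg1 !galM ?memvf.
rewrite -(galois_fixedField galL); apply/fixedFieldP; first exact: memvf.
move=> tau; rewrite -gen_sg => /cycleP [k ->]; elim: k => [|k IHk].
  by rewrite expg0 gal_id.
by rewrite expgS galM ?memvf // sga.
Qed.

End CyclicCubicGalois.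

Lemma prime_dim_subfield (F : fieldType) (L : fieldExtType F) (K : {aspace L})
    (x : L) :
  prime (\dim {:L}) -> x \in K -> x \notin 1%VS -> (K : {vspace L}) = fullv.
Proof.
move=> pL xK xQ; apply/eqP; rewrite eqEdim subvf /=.
have [_ /(_ _ (field_dimS (subvf K)))] := primeP pL.
case/orP=> [/eqP dK1 | /eqP -> //].
suff KQ : (K <= 1)%VS by rewrite (subvP KQ) in xQ.
by rewrite -(eqP (_ : 1%VS == K :> {vspace L})) // eqEdim sub1v dK1 dimv1.
Qed.

Section RationalExtension.
Variable L : fieldExtType rat.

Lemma ratext_natr_neq0 n : (0 < n)%N -> (n%:R : L) != 0.
Proof. by move=> n0; rewrite -(rmorph_nat (in_alg L)) fmorph_eq0 pnatr_eq0 -lt0n. Qed.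

(* Solutions of the Moebius relation are irrational: otherwise
   s (1 + s) = -1, i.e. s^2 + s + 1 = 0, in Q. *)
Lemma mob_orbit_irrational (f : {rmorphism L -> L}) (s : L) :
  mob_orbit f s -> s \notin 1%VS.
Proof.
move=> hs; apply/negP => /vlineP [c sc]; move: hs.
rewrite /mob_orbit sc -in_algE fmorph_eq_rat fmorph_rat -(fmorph_eq_rat (in_alg L)).
move=> hs; have cE : c * (1 + c) = -1.
  by apply: (fmorph_inj (in_alg L)); rewrite rmorphM rmorphD rmorph1 rmorphN1.
have : 0 < c * (1 + c) + 1 by nra.
by rewrite cE addNr ltxx.
Qed.

Lemma s_in_root_field (K : {aspace L}) (s : L) :
  tden s != 0 -> tpar s != 0 -> tpar s \in K -> troot0 s \in K -> s \in K.
Proof.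
move=> sD t0 tK rK; have c0 : 144 * tpar s ^+ 4 != 0.
  by rewrite mulf_neq0 ?expf_neq0 ?ratext_natr_neq0.
rewrite -(mulKf c0 s) s_from_troot0 //; move: (tpar s) (troot0 s) tK rK => t r tK rK.
by rewrite !(rpred_nat, rpredX, rpredV, rpredN, rpredD, rpredM).
Qed.

End RationalExtension.

Theorem lemma4p9 (L : splittingFieldType rat) :
  galois 1%VS {:L} ->
  ('Gal({:L} / 1%VS) \isog Zp 3)%g ->
  exists t : rat, splittingFieldFor 1%VS (map_poly (in_alg L) (gpoly t)) {:L}.
Proof.
move=> galL cycL; have [sg [sg3 sg_fix]] := cyclic3_generator galL cycL.
have n0 n : (0 < n)%N -> (n%:R : L) != 0 by apply: ratext_natr_neq0.
have [x xQ] : exists x : L, x \notin 1%VS.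
  have /subvPn [x _ xQ] : ~~ ({:L} <= 1)%VS.
    by apply/negP => /dimvS; rewrite (cyclic3_dim galL cycL) dimv1.
  by exists x.
have sgx : sg x != x by apply: contra xQ => /eqP; apply: sg_fix.
have [s [hs sD]] := mob_orbit_nondeg (n0 2%N isT) (n0 3%N isT) (n0 7%N isT)
  (mob_orbit_exists sg3 sgx).
have [c tc] : exists c : rat, tpar s = c%:A.
  by have /vlineP [c ->] := sg_fix _ (tpar_fixed hs sD); exists c.
exists c; exists [:: troot0 s; troot1 s; troot2 s].
  by rewrite gpolyE map_gcubic /= -tc gcubic_tpar // eqpxx.
apply: (prime_dim_subfield (K := <<1 & _>>%AS) (x := s)).
- by rewrite (cyclic3_dim galL cycL).
- apply: s_in_root_field => //; first exact: tpar_neq0 (n0 7%N isT) hs sD.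
    by rewrite tc (subvP (subv_adjoin_seq _ _)) // rpredZ ?rpred1.
  by apply: seqv_sub_adjoin; rewrite inE eqxx.
- exact: mob_orbit_irrational hs.
Qed.
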